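(* Let $c>0$, $m=\log_2 c$ and $r\ge 0$. Then the covering map $F:H^3_1(c/4)\to T^1\mathbb{H}^2(c)$ defined in the context is an isometric immersion. Here $H^3_1(c/4)$ carries the Lorentzian metric induced from $\mathbb{R}^4_2$, and $T^1\mathbb{H}^2(c)$ carries the metric induced by the indefinite generalized Cheeger–Gromoll metric $h_{m,r}$ on $T\mathbb{H}^2(c)$. That is, $F^*(h_{m,r}|_{T^1\mathbb{H}^2(c)})$ equals the canonical metric of $H^3_1(c/4)$.
   Context: $\mathbb{R}^n_\nu$ denotes $\mathbb{R}^n$ with the metric $\langle x,y\rangle=\sum_{i=1}^{n-\nu}x^iy^i-\sum_{j=n-\nu+1}^nx^jy^j$. The anti-de Sitter space is $H^3_1(c)=\{x\in\mathbb{R}^4_2:(x^1)^2+(x^2)^2-(x^3)^2-(x^4)^2=-1/c\}$ with the induced metric. Write $z_1=x^1+\sqrt{-1}x^2$, $z_2=x^3+\sqrt{-1}x^4$, so that $|z_1|^2-|z_2|^2=-1/c$ on $H^3_1(c)$. On $H^3_1(1)$ define the vector fields - $X_1(x)=(x^4,x^3,x^2,x^1)$, - $X_2(x)=(x^3,-x^4,x^1,-x^2)$, - $X_3(x)=(-x^2,x^1,-x^4,x^3)$. The hyperbolic plane is $\mathbb{H}^2(c)=\{x\in\mathbb{R}^3_1:(x^1)^2+(x^2)^2-(x^3)^2=-1/c,\ x^3>0\}$ with the induced Riemannian metric. Its unit tangent bundle is $T^1\mathbb{H}^2(c)=\{(p,v)\in\mathbb{R}^3_1\times\mathbb{R}^3_1: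 p\in\mathbb{H}^2(c),\ \langle v,v\rangle=1,\ \langle p,v\rangle=0\}$, with projection $\pi(p,v)=p$. For $x\in H^3_1(1)$ let $A_x=\sqrt{-1}\begin{pmatrix}\bar z_2&-z_1\\ \bar z_1&-z_2\end{pmatrix}\in\mathrm{SU}(1,1)$. Let $e_1=\begin{pmatrix}0&-\sqrt{-1}\\ \sqrt{-1}&0\end{pmatrix}$, $e_2=\begin{pmatrix}0&1\\1&0\end{pmatrix}$, $e_3=\begin{pmatrix}\sqrt{-1}&0\\0&-\sqrt{-1}\end{pmatrix}$. These form a pseudo-orthonormal basis of $\mathfrak{su}(1,1)$ for $\langle X,Y\rangle=\tfrac12\mathrm{Tr}(XY)$, with $\langle e_3,e_3\rangle=-1$. Identify $\mathfrak{su}(1,1)$ with $\mathbb{R}^3_1$ via coordinates in this basis. Then - $A_xe_1A_x^{-1}=(-\mathrm{Re}(z_1^2+\bar z_2^2),\ -\mathrm{Im}(z_1^2+\bar z_2^2),\ -2\mathrm{Re}(z_1z_2))$, - $A_xe_2A_x^{-1}=(-\mathrm{Im}(z_1^2-\bar z_2^2),\ \mathrm{Re}(z_1^2-\bar z_2^2),\ -2\mathrm{Im}(z_1z_2))$, - $A_xe_3A_x^{-1}=(2\mathrm{Re}(z_1\bar z_2),\ 2\mathrm{Im}(z_1\bar z_2),\ |z_1|^2+|z_2|^2)$. The map $F:H^3_1(c/4)\to T^1\mathbb{H}^2(c)$ is $$F(2x/\sqrt c)=\big(\tfrac1{\sqrt c}A_xe_3A_x^{-1},\ A_xe_1A_x^{-1}\big),\qquad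 x\in H^3_1(1),$$ i.e. the composition of the homothety $2x/\sqrt c\mapsto x$, the map $x\mapsto A_x$, the adjoint representation $\rho:\mathrm{SU}(1,1)\to\mathrm{SO}^+(1,2)$, and $(c_1\,c_2\,c_3)\mapsto(c_3/\sqrt c,c_1)$. Lifts: $T\mathbb{H}^2(c)\subset\mathbb{R}^3_1\times\mathbb{R}^3_1$. For $(p,e)\in T\mathbb{H}^2(c)$ and $X\in T_p\mathbb{H}^2(c)$: - the vertical lift $X^v$ is the velocity at $0$ of $t\mapsto(p,e+tX)$; - the horizontal lift $X^h$ is the velocity at $0$ of $t\mapsto(\gamma(t),V(t))$, where $\gamma(0)=p$, $\dot\gamma(0)=X$, and $V$ is Levi-Civita parallel along $\gamma$ with $V(0)=e$. Indefinite generalized Cheeger–Gromoll metric: for $m\in\mathbb{R}$ and $r\ge0$, $h_{m,r}$ on $T\mathbb{H}^2(c)$ is given at $(p,e)$ by - $h_{m,r}(X^h,Y^h)=\langle X,Y\rangle$, - $h_{m,r}(X^h,Y^v)=0$, - $h_{m,r}(X^v,Y^v)=-\omega^m(\langle X,Y\rangle+r\langle X,e\rangle\langle Y,e\rangle)$, where $\omega=1/(1+\langle e,e\rangle)$. *)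

From Stdlib Require Import Reals.
Open Scope R_scope.

Record R3 := mk3 { a1 : R; a2 : R; a3 : R }.
Record R4 := mk4 { b1 : R; b2 : R; b3 : R; b4 : R }.

Definition zero3 : R3 := mk3 0 0 0.
Definition zero4 : R4 := mk4 0 0 0 0.
Definition add3 (u v : R3) : R3 := mk3 (a1 u + a1 v) (a2 u + a2 v) (a3 u + a3 v).
Definition scale3 (k : R) (u : R3) : R3 := mk3 (k * a1 u) (k * a2 u) (k * a3 u).
Definition scale4 (k : R) (u : R4) : R4 := mk4 (k * b1 u) (k * b2 u) (k * b3 u) (k * b4 u).

Definition ip3 (u v : R3) : R := a1 u * a1 v + a2 u * a2 v - a3 u * a3 v.
Definition ip4 (u v : R4) : R := b1 u * b1 v + b2 u * b2 v - b3 u * b3 v - b4 u * b4 v.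

(* pairs (p,e) in R^3_1 x R^3_1 and tangent vectors to T H^2 *)
Definition add33 (u v : R3 * R3) : R3 * R3 := (add3 (fst u) (fst v), add3 (snd u) (snd v)).

Definition curve_deriv3 (f : R -> R3) (t : R) (v : R3) : Prop :=
  derivable_pt_lim (fun s => a1 (f s)) t (a1 v) /\
  derivable_pt_lim (fun s => a2 (f s)) t (a2 v) /\
  derivable_pt_lim (fun s => a3 (f s)) t (a3 v).

Definition curve_deriv4 (f : R -> R4) (t : R) (v : R4) : Prop :=
  derivable_pt_lim (fun s => b1 (f s)) t (b1 v) /\
  derivable_pt_lim (fun s => b2 (f s)) t (b2 v) /\
  derivable_pt_lim (fun s => b3 (f s)) t (b3 v) /\
  derivable_pt_lim (fun s => b4 (f s)) t (b4 v).

Definition curve_deriv33 (f : R -> R3 * R3) (t : R) (v : R3 * R3) : Prop :=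
  curve_deriv3 (fun s => fst (f s)) t (fst v) /\ curve_deriv3 (fun s => snd (f s)) t (snd v).

Definition H31 (k : R) (x : R4) : Prop := ip4 x x = - 1 / k.

Definition H2 (c : R) (p : R3) : Prop := ip3 p p = - 1 / c /\ 0 < a3 p.

Definition tangentH2 (p X : R3) : Prop := ip3 p X = 0.

Definition T1H2 (c : R) (p v : R3) : Prop := H2 c p /\ ip3 v v = 1 /\ ip3 p v = 0.

(* orthogonal projection of R^3_1 onto T_p H^2(c) (normal direction p, <p,p> = -1/c) *)
Definition tproj (c : R) (p u : R3) : R3 := add3 u (scale3 (c * ip3 u p) p).

(* Levi-Civita parallel vector field V (with derivative V') along the curve g in H^2(c):
   V is tangent to H^2(c) along g and the tangential part of its ambient derivative vanishes
   (Levi-Civita connection of the induced metric = tangential projection of the flat one). *)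
Definition parallel (c : R) (g V V' : R -> R3) : Prop :=
  forall t, tangentH2 (g t) (V t) /\ curve_deriv3 V t (V' t) /\ tproj c (g t) (V' t) = zero3.

(* xi is the horizontal lift X^h at (p,e): velocity at 0 of t |-> (g t, V t), with g a curve
   in H^2(c), g 0 = p, g'(0) = X, V parallel along g, V 0 = e. *)
Definition hlift (c : R) (p e X : R3) (xi : R3 * R3) : Prop :=
  exists g g' V V' : R -> R3,
    (forall t, H2 c (g t)) /\ (forall t, curve_deriv3 g t (g' t)) /\
    g 0 = p /\ g' 0 = X /\ parallel c g V V' /\ V 0 = e /\
    curve_deriv33 (fun t => (g t, V t)) 0 xi.

(* vertical lift Y^v at (p,e): velocity at 0 of t |-> (p, e + tY) *)
Definition vlift (Y : R3) : R3 * R3 := (zero3, Y).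

Definition omega (e : R3) : R := 1 / (1 + ip3 e e).

Definition log2 (x : R) : R := ln x / ln 2.

(* h_{m,r}(xi, eta) = val at (p,e), where xi = X1^h + Y1^v, eta = X2^h + Y2^v
   (bilinear extension of the defining formulas). Stated for every such decomposition. *)
Definition hmr_val (c m r : R) (p e : R3) (xi eta : R3 * R3) (val : R) : Prop :=
  forall (X1 Y1 X2 Y2 : R3) (h1 h2 : R3 * R3),
    tangentH2 p X1 -> tangentH2 p Y1 -> tangentH2 p X2 -> tangentH2 p Y2 ->
    hlift c p e X1 h1 -> hlift c p e X2 h2 ->
    xi = add33 h1 (vlift Y1) -> eta = add33 h2 (vlift Y2) ->
    val = ip3 X1 X2 - Rpower (omega e) m * (ip3 Y1 Y2 + r * ip3 Y1 e * ip3 Y2 e).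

(* With z1 = x1 + i x2, z2 = x3 + i x4, the coordinates of A_x e_3 A_x^{-1} and
   A_x e_1 A_x^{-1} in the basis (e1,e2,e3) of su(1,1) ~ R^3_1, written out in real form. *)
Definition Ad_e3 (x : R4) : R3 :=
  let x1 := b1 x in let x2 := b2 x in let x3 := b3 x in let x4 := b4 x in
  mk3 (2 * (x1 * x3 + x2 * x4))                         (* 2 Re(z1 conj z2) *)
      (2 * (x2 * x3 - x1 * x4))                         (* 2 Im(z1 conj z2) *)
      (x1 * x1 + x2 * x2 + x3 * x3 + x4 * x4).          (* |z1|^2 + |z2|^2 *)

Definition Ad_e1 (x : R4) : R3 :=
  let x1 := b1 x in let x2 := b2 x in let x3 := b3 x in let x4 := b4 x in
  mk3 (- (x1 * x1 - x2 * x2 + x3 * x3 - x4 * x4))     (* -Re(z1^2 + conj z2^2) *)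
      (- (2 * x1 * x2 - 2 * x3 * x4))                  (* -Im(z1^2 + conj z2^2) *)
      (- 2 * (x1 * x3 - x2 * x4)).                     (* -2 Re(z1 z2) *)

(* F(y) for y in H^3_1(c/4): with x = (sqrt c / 2) y in H^3_1(1),
   F(y) = ( (1/sqrt c) A_x e3 A_x^{-1}, A_x e1 A_x^{-1} ). *)
Definition Fmap (c : R) (y : R4) : R3 * R3 :=
  let x := scale4 (sqrt c / 2) y in (scale3 (1 / sqrt c) (Ad_e3 x), Ad_e1 x).

From Stdlib Require Import Reals Lra.
Open Scope R_scope.

(* Everything reduces to linear algebra at a point x of H^3_1(1), x = (sqrt c/2) y.
   The vector fields X1, X2, X3 of the context form a pseudo-orthonormal frame of
   T_x H^3_1(1) (X3 timelike), and the images Ad_e1 x, Ad_e2 x, Ad_e3 x of e1,e2,e3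
   under the adjoint representation form a pseudo-orthonormal frame of R^3_1.
   The differentials of x |-> Ad_e3 x and x |-> Ad_e1 x send X1, X2, X3 to
   explicit multiples of this frame.  On the other hand, a horizontal lift at (p,e)
   is forced to be (X, c<e,X> p), so splitting dF(u) into horizontal and vertical
   parts shows: dF(X1), dF(X2) are horizontal of length 2/sqrt c, dF(X3) is
   vertical, equal to -2 Ad_e2 x, orthogonal to the fibre point e = Ad_e1 x.
   Since omega = 1/2 on the unit sphere bundle and (1/2)^(log2 c) = 1/c, the r-term
   drops out and h_{m,r}(dF u, dF v) = (4/c) <u,v>, which after rescaling by
   sqrt c / 2 is <w1,w2>.  Injectivity of dF follows from the same frame formulas. *)

Definition add4 (u v : R4) : R4 := mk4 (b1 u + b1 v) (b2 u + b2 v) (b3 u + b3 v) (b4 u + b4 v).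

Lemma ip3_comm u v : ip3 u v = ip3 v u.
Proof. unfold ip3; ring. Qed.

Lemma ip3_add_l u v w : ip3 (add3 u v) w = ip3 u w + ip3 v w.
Proof. unfold ip3, add3; simpl; ring. Qed.

Lemma ip3_add_r u v w : ip3 u (add3 v w) = ip3 u v + ip3 u w.
Proof. unfold ip3, add3; simpl; ring. Qed.

Lemma ip3_scale_l k u v : ip3 (scale3 k u) v = k * ip3 u v.
Proof. unfold ip3, scale3; simpl; ring. Qed.

Lemma ip3_scale_r k u v : ip3 u (scale3 k v) = k * ip3 u v.
Proof. unfold ip3, scale3; simpl; ring. Qed.

Lemma ip4_scale a b u v : ip4 (scale4 a u) (scale4 b v) = a * b * ip4 u v.
Proof. unfold ip4, scale4; simpl; ring. Qed.

Lemma add3_zero_r u : add3 u zero3 = u.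
Proof. destruct u; unfold add3, zero3; simpl; f_equal; ring. Qed.

Lemma scale3_eq0 k u : k <> 0 -> scale3 k u = zero3 -> u = zero3.
Proof.
  intros Hk E; destruct u as [u1 u2 u3]; unfold scale3, zero3 in *; simpl in E.
  injection E as E1 E2 E3.
  apply Rmult_integral in E1, E2, E3.
  f_equal; [destruct E1 | destruct E2 | destruct E3]; tauto.
Qed.

Lemma scale4_eq0 k u : k <> 0 -> scale4 k u = zero4 -> u = zero4.
Proof.
  intros Hk E; destruct u as [u1 u2 u3 u4]; unfold scale4, zero4 in *; simpl in E.
  injection E as E1 E2 E3 E4.
  apply Rmult_integral in E1, E2, E3, E4.
  f_equal; [destruct E1 | destruct E2 | destruct E3 | destruct E4]; tauto.
Qed.

Lemma derivable_pt_lim_value_eq f x l l' :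
  derivable_pt_lim f x l -> l = l' -> derivable_pt_lim f x l'.
Proof. intros H <-; exact H. Qed.

Ltac derive :=
  lazymatch goal with
  | |- derivable_pt_lim (fun _ => ?k) _ _ => apply derivable_pt_lim_const
  | |- derivable_pt_lim (fun t => @?f t + @?g t) _ _ =>
      apply (derivable_pt_lim_plus f g); derive
  | |- derivable_pt_lim (fun t => @?f t - @?g t) _ _ =>
      apply (derivable_pt_lim_minus f g); derive
  | |- derivable_pt_lim (fun t => @?f t * @?g t) _ _ =>
      apply (derivable_pt_lim_mult f g); derive
  | |- derivable_pt_lim (fun t => - @?f t) _ _ => apply (derivable_pt_lim_opp f); derive
  | |- _ => eassumption
  end.

Lemma curve_deriv3_unique f v v' : curve_deriv3 f 0 v -> curve_deriv3 f 0 v' -> v = v'.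
Proof.
  intros (D1 & D2 & D3) (E1 & E2 & E3); destruct v, v'; simpl in *.
  f_equal; eapply uniqueness_limite; eassumption.
Qed.

Lemma curve_deriv33_unique f v v' : curve_deriv33 f 0 v -> curve_deriv33 f 0 v' -> v = v'.
Proof.
  intros [D1 D2] [E1 E2]; destruct v, v'; simpl in *.
  f_equal; eapply curve_deriv3_unique; eassumption.
Qed.

Lemma pseudo_sphere_tangent (s : R -> R4) w K :
  (forall t, ip4 (s t) (s t) = K) -> curve_deriv4 s 0 w -> ip4 (s 0) w = 0.
Proof.
  intros Hs (D1 & D2 & D3 & D4).
  assert (Hd : derivable_pt_lim (fun t => ip4 (s t) (s t)) 0 (2 * ip4 (s 0) w)).
  { unfold ip4; eapply derivable_pt_lim_value_eq; [derive | ring]. }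
  assert (Hconst : derivable_pt_lim (fun t => ip4 (s t) (s t)) 0 0).
  { apply (derivable_pt_lim_ext (fun _ => K)); [intro; now rewrite Hs |].
    apply derivable_pt_lim_const. }
  pose proof (uniqueness_limite _ _ _ _ Hd Hconst); lra.
Qed.

(* Horizontal lifts: along a curve g through p with velocity X, a parallel field V
   with V 0 = e satisfies <g,V> = 0, hence <V'(0),p> = -<e,X>; as its tangential part
   vanishes, V'(0) = c<e,X> p.  Thus X^h = (X, c<e,X> p) at (p,e). *)
Lemma horizontal_lift_eq c p e X h :
  hlift c p e X h -> h = (X, scale3 (c * ip3 e X) p).
Proof.
  intros (g & g' & V & V' & _ & Hg' & Hg0 & Hg'0 & Hpar & HV0 & [Hh1 Hh2]).
  destruct (Hpar 0) as (_ & HV' & Hproj).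
  assert (Efst : fst h = X) by (rewrite <- Hg'0; exact (curve_deriv3_unique g _ _ Hh1 (Hg' 0))).
  assert (Esnd : snd h = V' 0) by exact (curve_deriv3_unique V _ _ Hh2 HV').
  assert (Horth : ip3 (g' 0) (V 0) + ip3 (g 0) (V' 0) = 0).
  { destruct (Hg' 0) as (G1 & G2 & G3); destruct HV' as (W1 & W2 & W3).
    assert (Hd : derivable_pt_lim (fun t => ip3 (g t) (V t)) 0
                   (ip3 (g' 0) (V 0) + ip3 (g 0) (V' 0))).
    { unfold ip3; eapply derivable_pt_lim_value_eq; [derive | ring]. }
    apply (uniqueness_limite _ _ _ _ Hd).
    apply (derivable_pt_lim_ext (fun _ => 0)); [intro t; symmetry; apply (Hpar t) |].
    apply derivable_pt_lim_const. }
  rewrite Hg0, Hg'0, HV0, ip3_comm in Horth; rewrite Hg0 in Hproj.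
  destruct h as [h1 h2]; simpl in Efst, Esnd; subst h1 h2; f_equal.
  assert (Hp : ip3 (V' 0) p = - ip3 e X) by (rewrite ip3_comm; lra).
  unfold tproj in Hproj; rewrite Hp in Hproj.
  destruct (V' 0), p; unfold add3, scale3, zero3 in *; simpl in *.
  injection Hproj as Q1 Q2 Q3; f_equal; lra.
Qed.

Definition Xf1 (x : R4) : R4 := mk4 (b4 x) (b3 x) (b2 x) (b1 x).
Definition Xf2 (x : R4) : R4 := mk4 (b3 x) (- b4 x) (b1 x) (- b2 x).
Definition Xf3 (x : R4) : R4 := mk4 (- b2 x) (b1 x) (- b4 x) (b3 x).

Definition frame_comb (x : R4) (p1 p2 p3 : R) : R4 :=
  mk4 (p1 * b1 (Xf1 x) + p2 * b1 (Xf2 x) + p3 * b1 (Xf3 x))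
      (p1 * b2 (Xf1 x) + p2 * b2 (Xf2 x) + p3 * b2 (Xf3 x))
      (p1 * b3 (Xf1 x) + p2 * b3 (Xf2 x) + p3 * b3 (Xf3 x))
      (p1 * b4 (Xf1 x) + p2 * b4 (Xf2 x) + p3 * b4 (Xf3 x)).

(* Pointwise identity on R^4_2: together with x, the frame spans everything. *)
Lemma frame_expansion x u :
  frame_comb x (ip4 u (Xf1 x)) (ip4 u (Xf2 x)) (- ip4 u (Xf3 x)) =
  add4 (scale4 (- ip4 x x) u) (scale4 (ip4 x u) x).
Proof. destruct x, u; unfold frame_comb, Xf1, Xf2, Xf3, ip4, add4, scale4; simpl; f_equal; ring. Qed.

Lemma frame_decomposition x u :
  ip4 x x = -1 -> ip4 x u = 0 -> exists p1 p2 p3, u = frame_comb x p1 p2 p3.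
Proof.
  intros Hx Hu; do 3 eexists; rewrite frame_expansion, Hx, Hu.
  destruct u, x; unfold add4, scale4; simpl; f_equal; ring.
Qed.

Lemma ip4_frame_comb x p1 p2 p3 q1 q2 q3 :
  ip4 (frame_comb x p1 p2 p3) (frame_comb x q1 q2 q3) =
  - ip4 x x * (p1 * q1 + p2 * q2 - p3 * q3).
Proof. destruct x; unfold ip4, frame_comb, Xf1, Xf2, Xf3; simpl; ring. Qed.

Definition Ad_e2 (x : R4) : R3 :=
  let x1 := b1 x in let x2 := b2 x in let x3 := b3 x in let x4 := b4 x in
  mk3 (- (2 * x1 * x2 + 2 * x3 * x4))               (* -Im(z1^2 - conj z2^2) *)
      (x1 * x1 - x2 * x2 - x3 * x3 + x4 * x4)       (* Re(z1^2 - conj z2^2) *)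
      (- 2 * (x1 * x4 + x2 * x3)).                  (* -2 Im(z1 z2) *)

Lemma Ad_e1_norm x : ip3 (Ad_e1 x) (Ad_e1 x) = ip4 x x * ip4 x x.
Proof. destruct x; unfold ip3, Ad_e1, ip4; simpl; ring. Qed.
Lemma Ad_e2_norm x : ip3 (Ad_e2 x) (Ad_e2 x) = ip4 x x * ip4 x x.
Proof. destruct x; unfold ip3, Ad_e2, ip4; simpl; ring. Qed.
Lemma Ad_e3_norm x : ip3 (Ad_e3 x) (Ad_e3 x) = - (ip4 x x * ip4 x x).
Proof. destruct x; unfold ip3, Ad_e3, ip4; simpl; ring. Qed.
Lemma Ad_e12_orth x : ip3 (Ad_e1 x) (Ad_e2 x) = 0.
Proof. destruct x; unfold ip3, Ad_e1, Ad_e2; simpl; ring. Qed.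
Lemma Ad_e21_orth x : ip3 (Ad_e2 x) (Ad_e1 x) = 0.
Proof. rewrite ip3_comm; apply Ad_e12_orth. Qed.
Lemma Ad_e13_orth x : ip3 (Ad_e1 x) (Ad_e3 x) = 0.
Proof. destruct x; unfold ip3, Ad_e1, Ad_e3; simpl; ring. Qed.
Lemma Ad_e23_orth x : ip3 (Ad_e2 x) (Ad_e3 x) = 0.
Proof. destruct x; unfold ip3, Ad_e2, Ad_e3; simpl; ring. Qed.

Ltac ip3_expand :=
  rewrite ?ip3_add_l, ?ip3_add_r, ?ip3_scale_l, ?ip3_scale_r,
    ?Ad_e1_norm, ?Ad_e2_norm, ?Ad_e3_norm, ?Ad_e12_orth, ?Ad_e21_orth, ?Ad_e13_orth, ?Ad_e23_orth.

Definition dAd_e3 (x u : R4) : R3 :=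
  let x1 := b1 x in let x2 := b2 x in let x3 := b3 x in let x4 := b4 x in
  let u1 := b1 u in let u2 := b2 u in let u3 := b3 u in let u4 := b4 u in
  mk3 (2 * (u1 * x3 + x1 * u3 + u2 * x4 + x2 * u4))
      (2 * (u2 * x3 + x2 * u3 - u1 * x4 - x1 * u4))
      (2 * (x1 * u1 + x2 * u2 + x3 * u3 + x4 * u4)).

Definition dAd_e1 (x u : R4) : R3 :=
  let x1 := b1 x in let x2 := b2 x in let x3 := b3 x in let x4 := b4 x in
  let u1 := b1 u in let u2 := b2 u in let u3 := b3 u in let u4 := b4 u in
  mk3 (- (2 * x1 * u1 - 2 * x2 * u2 + 2 * x3 * u3 - 2 * x4 * u4))
      (- (2 * (u1 * x2 + x1 * u2) - 2 * (u3 * x4 + x3 * u4)))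
      (- 2 * (u1 * x3 + x1 * u3 - u2 * x4 - x2 * u4)).

Definition dFmap (c : R) (y w : R4) : R3 * R3 :=
  (scale3 (1 / sqrt c) (dAd_e3 (scale4 (sqrt c / 2) y) (scale4 (sqrt c / 2) w)),
   dAd_e1 (scale4 (sqrt c / 2) y) (scale4 (sqrt c / 2) w)).

Lemma Fmap_derivative c (s : R -> R4) w :
  curve_deriv4 s 0 w -> curve_deriv33 (fun t => Fmap c (s t)) 0 (dFmap c (s 0) w).
Proof.
  intros (D1 & D2 & D3 & D4).
  unfold curve_deriv33, curve_deriv3, dFmap, Fmap; simpl.
  repeat split; (eapply derivable_pt_lim_value_eq; [unfold Rdiv; derive | unfold Rdiv; ring]).
Qed.

Lemma dAd_e3_frame x p1 p2 p3 :
  dAd_e3 x (frame_comb x p1 p2 p3) =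
  add3 (scale3 (-2 * p2) (Ad_e1 x)) (scale3 (-2 * p1) (Ad_e2 x)).
Proof.
  destruct x; unfold dAd_e3, frame_comb, Xf1, Xf2, Xf3, add3, scale3, Ad_e1, Ad_e2; simpl.
  f_equal; ring.
Qed.

Lemma dAd_e1_frame x p1 p2 p3 :
  dAd_e1 x (frame_comb x p1 p2 p3) =
  add3 (scale3 (-2 * p3) (Ad_e2 x)) (scale3 (-2 * p2) (Ad_e3 x)).
Proof.
  destruct x; unfold dAd_e1, frame_comb, Xf1, Xf2, Xf3, add3, scale3, Ad_e2, Ad_e3; simpl.
  f_equal; ring.
Qed.

(* Vertical part of dF(u) at x in H^3_1(1), for c = 1: dAd_e1 x u minus the
   second component c<e,X>p of the horizontal lift of X = dAd_e3 x u. *)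
Definition vertical_part (x u : R4) : R3 :=
  add3 (dAd_e1 x u) (scale3 (- ip3 (Ad_e1 x) (dAd_e3 x u)) (Ad_e3 x)).

Lemma vertical_part_frame x p1 p2 p3 :
  ip4 x x = -1 -> vertical_part x (frame_comb x p1 p2 p3) = scale3 (-2 * p3) (Ad_e2 x).
Proof.
  intro Hx; unfold vertical_part; rewrite dAd_e3_frame, dAd_e1_frame.
  assert (He : ip3 (Ad_e1 x) (add3 (scale3 (-2 * p2) (Ad_e1 x)) (scale3 (-2 * p1) (Ad_e2 x)))
               = -2 * p2) by (ip3_expand; rewrite Hx; ring).
  rewrite He; destruct (Ad_e2 x), (Ad_e3 x); unfold add3, scale3; simpl; f_equal; ring.
Qed.

Lemma vertical_part_orth x u :
  ip4 x x = -1 -> ip4 x u = 0 -> ip3 (vertical_part x u) (Ad_e1 x) = 0.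
Proof.
  intros Hx Hu; destruct (frame_decomposition x u Hx Hu) as (p1 & p2 & p3 & ->).
  rewrite vertical_part_frame by exact Hx; ip3_expand; ring.
Qed.

Lemma unit_isometry x u v :
  ip4 x x = -1 -> ip4 x u = 0 -> ip4 x v = 0 ->
  ip3 (dAd_e3 x u) (dAd_e3 x v) - ip3 (vertical_part x u) (vertical_part x v) = 4 * ip4 u v.
Proof.
  intros Hx Hu Hv.
  destruct (frame_decomposition x u Hx Hu) as (p1 & p2 & p3 & ->).
  destruct (frame_decomposition x v Hx Hv) as (q1 & q2 & q3 & ->).
  rewrite !vertical_part_frame, !dAd_e3_frame, ip4_frame_comb by exact Hx.
  ip3_expand; rewrite Hx; ring.
Qed.

(* dF is injective on T_x H^3_1(1), pairing its outputs with the adjoint frame. *)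
Lemma unit_injective x u :
  ip4 x x = -1 -> ip4 x u = 0 -> dAd_e3 x u = zero3 -> dAd_e1 x u = zero3 -> u = zero4.
Proof.
  intros Hx Hu E3 E1; destruct (frame_decomposition x u Hx Hu) as (p1 & p2 & p3 & ->).
  rewrite dAd_e3_frame in E3; rewrite dAd_e1_frame in E1.
  pose proof (f_equal (ip3 (Ad_e1 x)) E3) as F1.
  pose proof (f_equal (ip3 (Ad_e2 x)) E3) as F2.
  pose proof (f_equal (ip3 (Ad_e2 x)) E1) as F3.
  revert F1 F2 F3; ip3_expand; rewrite Hx.
  unfold ip3, zero3; simpl; intros F1 F2 F3.
  assert (p1 = 0) by lra; assert (p2 = 0) by lra; assert (p3 = 0) by lra; subst.
  destruct x; unfold frame_comb, zero4; simpl; f_equal; ring.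
Qed.

Ltac sqrt_as_variable c :=
  let q := fresh "q" in
  assert (Hqq : sqrt c * sqrt c = c) by (apply sqrt_sqrt; lra);
  assert (Hq : 0 < sqrt c) by (apply sqrt_lt_R0; lra);
  set (q := sqrt c) in *; clearbody q; subst c.

Lemma rescaled_point c y :
  0 < c -> H31 (c / 4) y -> ip4 (scale4 (sqrt c / 2) y) (scale4 (sqrt c / 2) y) = -1.
Proof.
  intros Hc Hy; unfold H31 in Hy; rewrite ip4_scale, Hy.
  sqrt_as_variable c; field; lra.
Qed.

(* On the unit sphere bundle omega = 1/2, and (1/2)^(log2 c) = 1/c. *)
Lemma Rpower_half_log2 c : 0 < c -> Rpower (1 / (1 + 1)) (log2 c) = 1 / c.
Proof.
  intro Hc; unfold Rpower, log2.
  replace (1 / (1 + 1)) with (/ 2) by field; rewrite ln_Rinv by lra.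
  assert (Hln2 : 0 < ln 2) by (rewrite <- ln_1; apply ln_increasing; lra).
  replace (ln c / ln 2 * - ln 2) with (- ln c) by (field; lra).
  rewrite exp_Ropp, exp_ln by lra; field; lra.
Qed.

Lemma Fmap_in_T1H2 c y : 0 < c -> H31 (c / 4) y -> T1H2 c (fst (Fmap c y)) (snd (Fmap c y)).
Proof.
  intros Hc Hy; pose proof (rescaled_point c y Hc Hy) as Hx.
  unfold Fmap; simpl; set (x := scale4 (sqrt c / 2) y) in *.
  split; [split | split].
  - rewrite ip3_scale_l, ip3_scale_r, Ad_e3_norm, Hx; sqrt_as_variable c; field; lra.
  - clearbody x; destruct x as [x1 x2 x3 x4]; unfold ip4 in Hx; unfold Ad_e3, scale3; simpl in *.
    apply Rmult_lt_0_compat; [apply Rdiv_lt_0_compat, sqrt_lt_R0; lra | nra].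
  - rewrite Ad_e1_norm, Hx; ring.
  - rewrite ip3_scale_l, ip3_comm, Ad_e13_orth; ring.
Qed.

Lemma dFmap_split c y w X Y h :
  0 < c -> hlift c (fst (Fmap c y)) (snd (Fmap c y)) X h -> dFmap c y w = add33 h (vlift Y) ->
  X = scale3 (1 / sqrt c) (dAd_e3 (scale4 (sqrt c / 2) y) (scale4 (sqrt c / 2) w)) /\
  Y = vertical_part (scale4 (sqrt c / 2) y) (scale4 (sqrt c / 2) w).
Proof.
  intros Hc Hh E; apply horizontal_lift_eq in Hh; subst h.
  unfold dFmap, Fmap, add33, vlift in E; cbn [fst snd] in E.
  rewrite add3_zero_r in E.
  pose proof (f_equal fst E) as EX; pose proof (f_equal snd E) as EY; cbn [fst snd] in EX, EY.
  subst X; split; [reflexivity |].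
  unfold vertical_part; rewrite EY.
  set (x := scale4 (sqrt c / 2) y); set (u := scale4 (sqrt c / 2) w).
  destruct Y, (Ad_e1 x), (Ad_e3 x), (dAd_e3 x u); unfold add3, scale3, ip3; simpl.
  sqrt_as_variable c; f_equal; field; lra.
Qed.

Lemma dFmap_isometry c r y w1 w2 :
  0 < c -> H31 (c / 4) y -> ip4 y w1 = 0 -> ip4 y w2 = 0 ->
  hmr_val c (log2 c) r (fst (Fmap c y)) (snd (Fmap c y)) (dFmap c y w1) (dFmap c y w2)
    (ip4 w1 w2).
Proof.
  intros Hc Hy T1 T2 X1 Y1 X2 Y2 h1 h2 _ _ _ _ Hh1 Hh2 E1 E2.
  destruct (dFmap_split c y w1 X1 Y1 h1 Hc Hh1 E1) as [-> ->].
  destruct (dFmap_split c y w2 X2 Y2 h2 Hc Hh2 E2) as [-> ->].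
  pose proof (rescaled_point c y Hc Hy) as Hx.
  destruct (Fmap_in_T1H2 c y Hc Hy) as (_ & He & _).
  unfold omega; rewrite He, Rpower_half_log2 by exact Hc.
  unfold Fmap; cbn [snd]; set (k := sqrt c / 2) in *.
  assert (Hu1 : ip4 (scale4 k y) (scale4 k w1) = 0) by (rewrite ip4_scale, T1; ring).
  assert (Hu2 : ip4 (scale4 k y) (scale4 k w2) = 0) by (rewrite ip4_scale, T2; ring).
  rewrite !vertical_part_orth by assumption.
  pose proof (unit_isometry _ _ _ Hx Hu1 Hu2) as Hiso; rewrite ip4_scale in Hiso.
  rewrite ip3_scale_l, ip3_scale_r.
  match type of Hiso with ?H - ?V = ?W => replace H with (V + W) by lra end.
  unfold k; sqrt_as_variable c; field; lra.
Qed.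

Lemma dFmap_injective c y w :
  0 < c -> H31 (c / 4) y -> ip4 y w = 0 -> dFmap c y w = (zero3, zero3) -> w = zero4.
Proof.
  intros Hc Hy T E; unfold dFmap in E.
  pose proof (f_equal fst E) as E3; pose proof (f_equal snd E) as E1; cbn [fst snd] in E3, E1.
  assert (Hq : 0 < sqrt c) by (apply sqrt_lt_R0; exact Hc).
  assert (Hk : sqrt c / 2 <> 0) by (apply Rgt_not_eq, Rdiv_lt_0_compat; lra).
  assert (Hr : 1 / sqrt c <> 0) by (apply Rgt_not_eq, Rdiv_lt_0_compat; lra).
  apply (scale4_eq0 _ _ Hk), (unit_injective (scale4 (sqrt c / 2) y)).
  - exact (rescaled_point c y Hc Hy).
  - rewrite ip4_scale, T; ring.
  - exact (scale3_eq0 _ _ Hr E3).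
  - exact E1.
Qed.

Theorem theorem2 (c m r : R) (Hc : 0 < c) (Hm : m = log2 c) (Hr : 0 <= r) :
  (* F maps H^3_1(c/4) into T^1 H^2(c) *)
  (forall y : R4, H31 (c / 4) y -> T1H2 c (fst (Fmap c y)) (snd (Fmap c y))) /\
  (* isometry: h_{m,r}(dF w1, dF w2) = <w1, w2> for tangent vectors w1, w2 of H^3_1(c/4) *)
  (forall (y w1 w2 : R4) (s1 s2 : R -> R4) (xi1 xi2 : R3 * R3),
     (forall t, H31 (c / 4) (s1 t)) -> s1 0 = y -> curve_deriv4 s1 0 w1 ->
     (forall t, H31 (c / 4) (s2 t)) -> s2 0 = y -> curve_deriv4 s2 0 w2 ->
     curve_deriv33 (fun t => Fmap c (s1 t)) 0 xi1 ->
     curve_deriv33 (fun t => Fmap c (s2 t)) 0 xi2 ->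
     hmr_val c m r (fst (Fmap c y)) (snd (Fmap c y)) xi1 xi2 (ip4 w1 w2)) /\
  (* immersion: dF is injective on tangent vectors *)
  (forall (y w : R4) (s : R -> R4),
     (forall t, H31 (c / 4) (s t)) -> s 0 = y -> curve_deriv4 s 0 w ->
     curve_deriv33 (fun t => Fmap c (s t)) 0 (zero3, zero3) -> w = zero4).
Proof.
  split; [| split].
  - intros y; exact (Fmap_in_T1H2 c y Hc).
  - intros y w1 w2 s1 s2 xi1 xi2 Hs1 <- Hd1 Hs2 Hs20 Hd2 Hxi1 Hxi2; subst m.
    rewrite (curve_deriv33_unique _ _ _ Hxi1 (Fmap_derivative c s1 w1 Hd1)).
    rewrite (curve_deriv33_unique _ _ _ Hxi2 (Fmap_derivative c s2 w2 Hd2)), Hs20.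
    apply dFmap_isometry; [exact Hc | apply Hs1 | exact (pseudo_sphere_tangent s1 w1 _ Hs1 Hd1) |].
    rewrite <- Hs20; exact (pseudo_sphere_tangent s2 w2 _ Hs2 Hd2).
  - intros y w s Hs <- Hd Hxi.
    apply (dFmap_injective c (s 0) w Hc (Hs 0)).
    + exact (pseudo_sphere_tangent s w _ Hs Hd).
    + exact (curve_deriv33_unique _ _ _ (Fmap_derivative c s w Hd) Hxi).
Qed.
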